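(* Let $D$, $\Omega<0$, $\mu$ and $\varphi$ be as in the context. Then there exists $\lambda^\star>0$ such that for every $\lambda\ge\lambda^\star$, $\varphi_\lambda(x)>0$ for all $x\in H_\lambda$. Moreover, for every $\lambda_0>0$ there exists $R(\lambda_0)>0$ such that for every $\lambda\ge\lambda_0$ and every $x\in H_\lambda$ with $|x|\ge R(\lambda_0)$ one has $\varphi_\lambda(x)>0$.
   Context: Setting: $D\subset\mathbb{R}^2$ is a bounded simply connected domain with $C^1$ boundary and barycenter at the origin, belonging to the class $\Sigma_{\arccos\frac1{\sqrt5}}$ (for $x_0\in\partial D$ with outward unit normal $\vec\nu(x_0)$: (1) $x_0\cdot\vec\nu(x_0)\ge0$; (2) no point $x\in D$ satisfies $\frac{x-x_0}{|x-x_0|}\cdot\vec\nu(x_0)\ge\frac1{\sqrt5}$; (3) the reflection across the tangent line at $x_0$ of $\{x\in D:(x-x_0)\cdot\vec\nu(x_0)\ge0\}$ is contained in $D$). $\chi_D$ is a V-state with angular velocity $\Omega<0$: $\psi(x)-\frac12\Omega|x|^2=\mu$ on $\partial D$, where $\psi(x)=\frac1{2\pi}\int_D\log|x-y|\,dy$. Set $\varphi(x)=\mu+\frac12\Omega|x|^2-\psi(x)$; it satisfies $\varphi(x)=\mu+\frac12\Omega|x|^2-\frac1{2\pi}\int_{\mathbb{R}^2}\log|x-y|\,H(\varphi(y))\,dy$ for all $x$, with $H=\chi_{[0,\infty)}$. Notation: for $\lambda>0$, $H_\lambda=\{(x_1,x_2)\in\mathbb{R}^2:x_1<\lambda\}$,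 $T_\lambda=\{(\lambda,x_2):x_2\in\mathbb{R}\}$, $x_\lambda=(2\lambda-x_1,x_2)$ for $x=(x_1,x_2)$, and $\varphi_\lambda(x)=\varphi(x)-\varphi(x_\lambda)$. *)

From HB Require Import structures.
From mathcomp Require Import all_boot all_order all_algebra.
From mathcomp Require Import all_classical all_reals all_analysis.
Set Implicit Arguments. Unset Strict Implicit. Unset Printing Implicit Defensive.
Import Order.TTheory GRing.Theory Num.Theory.
Import numFieldNormedType.Exports.
Local Open Scope classical_set_scope.
Local Open Scope ring_scope.

Section Plane.
Variable R : realType.
Notation P := (R * R)%type.

(* Euclidean structure of R^2 (the library norm on pairs is the max norm). *)
Definition padd (x y : P) : P := (x.1 + y.1, x.2 + y.2).
Definition psub (x y : P) : P := (x.1 - y.1, x.2 - y.2).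
Definition pscale (a : R) (x : P) : P := (a * x.1, a * x.2).
Definition dot (x y : P) : R := x.1 * y.1 + x.2 * y.2.
Definition enorm (x : P) : R := Num.sqrt (dot x x).
Definition rot90 (x : P) : P := (- x.2, x.1).

Definition leb2 := ((@lebesgue_measure R) \x (@lebesgue_measure R))%E.

Definition bdry (D : set P) : set P := closure D `\` interior D.

Definition bounded_set (D : set P) : Prop :=
  exists M : R, forall x, D x -> enorm x <= M.

Definition simply_connected (D : set P) : Prop :=
  forall gamma : R -> P,
    {within `[0, 1]%classic, continuous gamma} ->
    (forall t, 0 <= t <= 1 -> D (gamma t)) ->
    gamma 0 = gamma 1 ->
    exists H : P -> P,
      {within (`[0, 1] `*` `[0, 1])%classic, continuous H} /\
      (forall s t, 0 <= s <= 1 -> 0 <= t <= 1 -> D (H (s, t))) /\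
      (forall t, 0 <= t <= 1 -> H (0, t) = gamma t) /\
      (forall t, 0 <= t <= 1 -> H (1, t) = gamma 0) /\
      (forall s, 0 <= s <= 1 -> H (s, 0) = H (s, 1)).

(* nu is the outward unit normal of D at x0, D being locally (near x0) the
   region below the graph of a C^1 function over the tangent line. *)
Definition outward_normal (D : set P) (x0 nu : P) : Prop :=
  enorm nu = 1 /\
  exists (r : R) (g : R -> R),
    0 < r /\ g 0 = 0 /\ (forall t, derivable g t 1) /\
    continuous (derive1 g) /\ derive1 g 0 = 0 /\
    forall t s, `|t| < r -> `|s| < r ->
      (D (padd x0 (padd (pscale t (rot90 nu)) (pscale s nu))) <-> s < g t).

Definition C1_domain (D : set P) : Prop :=
  open D /\ connected D /\ (exists x, D x) /\ bounded_set D /\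
  simply_connected D /\
  forall x0, bdry D x0 -> exists nu, outward_normal D x0 nu.

Definition barycenter_origin (D : set P) : Prop :=
  (\int[leb2]_(y in D) (y.1)%:E = 0)%E /\ (\int[leb2]_(y in D) (y.2)%:E = 0)%E.

Definition reflect_line (x0 nu x : P) : P :=
  psub x (pscale (2 * dot (psub x x0) nu) nu).

Definition in_Sigma (D : set P) : Prop :=
  forall x0 nu, bdry D x0 -> outward_normal D x0 nu ->
    [/\ 0 <= dot x0 nu,
        ~ (exists x, D x /\
             (Num.sqrt 5)^-1 <= (enorm (psub x x0))^-1 * dot (psub x x0) nu)
      & forall x, D x -> 0 <= dot (psub x x0) nu -> D (reflect_line x0 nu x)].

Definition psi (D : set P) (x : P) : R :=
  (2 * pi)^-1 * fine (\int[leb2]_(y in D) (ln (enorm (psub x y)))%:E)%E.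

Definition Vstate (D : set P) (Omega mu : R) : Prop :=
  forall x, bdry D x -> psi D x - 2^-1 * Omega * enorm x ^+ 2 = mu.

Definition phi (D : set P) (Omega mu : R) (x : P) : R :=
  mu + 2^-1 * Omega * enorm x ^+ 2 - psi D x.

Definition heav (t : R) : R := if 0 <= t then 1 else 0.

Definition reflT (lam : R) (x : P) : P := (2 * lam - x.1, x.2).

Definition phi_lam (D : set P) (Omega mu lam : R) (x : P) : R :=
  phi D Omega mu x - phi D Omega mu (reflT lam x).

End Plane.

From HB Require Import structures.
From mathcomp Require Import all_boot all_order all_algebra.
From mathcomp Require Import all_classical all_reals all_analysis.
From mathcomp Require Import measurable_realfun ring lra.
Import Order.TTheory GRing.Theory Num.Theory.
Import numFieldNormedType.Exports.
Local Open Scope classical_set_scope.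
Local Open Scope ring_scope.

(* Write P(u) = \int_D ln|u - y| dy, so that psi = P / (2 pi) and
   phi_lam(x) = 2 Omega lam (x_1 - lam) + (P(x_lam) - P(x)) / (2 pi),
   whose first term is positive on H_lam because Omega < 0.  For y in D,
   |x - y|^2 - |x_lam - y|^2 = 4 (lam - x_1) (y_1 - lam).  Once lam exceeds the
   radius M of D this is nonpositive, hence P(x) <= P(x_lam).  If instead
   |x| >= M + r, it is at most 4 (lam - x_1) M while both distances are at least r,
   so ln|x - y| <= ln|x_lam - y| + 4 (lam - x_1) M / r^2; integrated over D, this
   error is beaten by the first term as soon as r^2 > M |D| / (pi |Omega| lam0). *)

Section EuclideanPlane.
Context {R : realType}.
Implicit Types (x y z w : R * R) (lam : R).

Lemma enorm_ge0 z : 0 <= enorm z.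
Proof. exact: sqrtr_ge0. Qed.

Lemma enorm_sqr z : enorm z ^+ 2 = z.1 ^+ 2 + z.2 ^+ 2.
Proof. by rewrite /enorm /dot sqr_sqrtr -?expr2 // addr_ge0 // sqr_ge0. Qed.

Lemma ler_enorm z w : z.1 ^+ 2 + z.2 ^+ 2 <= w.1 ^+ 2 + w.2 ^+ 2 -> enorm z <= enorm w.
Proof. by rewrite /enorm /dot -!expr2; exact: ler_wsqrtr. Qed.

Lemma normr_fst_le_enorm z : `|z.1| <= enorm z.
Proof. by rewrite -sqrtr_sqr /enorm /dot -!expr2 ler_wsqrtr // lerDl sqr_ge0. Qed.

Lemma normr_snd_le_enorm z : `|z.2| <= enorm z.
Proof. by rewrite -sqrtr_sqr /enorm /dot -!expr2 ler_wsqrtr // lerDr sqr_ge0. Qed.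

Lemma dot_le_enorm z w : dot z w <= enorm z * enorm w.
Proof.
have zw_ge0 : 0 <= enorm z * enorm w by rewrite mulr_ge0 // enorm_ge0.
suff : dot z w ^+ 2 <= (enorm z * enorm w) ^+ 2 by rewrite /dot; nra.
rewrite exprMn !enorm_sqr -subr_ge0 /dot.
have -> : (z.1 ^+ 2 + z.2 ^+ 2) * (w.1 ^+ 2 + w.2 ^+ 2) - (z.1 * w.1 + z.2 * w.2) ^+ 2
  = (z.1 * w.2 - z.2 * w.1) ^+ 2 by ring.
exact: sqr_ge0.
Qed.

Lemma enorm_lerB x y : enorm x - enorm y <= enorm (psub x y).
Proof.
have := dot_le_enorm (psub x y) y; have := enorm_sqr x; have := enorm_sqr y.
have := enorm_sqr (psub x y); have := enorm_ge0 x; have := enorm_ge0 y.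
have := enorm_ge0 (psub x y); rewrite /dot /psub /=; nra.
Qed.

Lemma enorm_psub_reflT lam x y :
  enorm (psub x y) ^+ 2 - enorm (psub (reflT lam x) y) ^+ 2
  = 4 * (lam - x.1) * (y.1 - lam).
Proof. by rewrite !enorm_sqr /psub /reflT /=; ring. Qed.

Lemma enorm_le_reflT {lam x} : 0 <= lam -> x.1 <= lam -> enorm x <= enorm (reflT lam x).
Proof.
move=> lam_ge0 x1_le; apply: ler_enorm; rewrite /reflT /=.
have : 0 <= lam * (lam - x.1) by rewrite mulr_ge0 // subr_ge0.
nra.
Qed.

Lemma measurable_fun_ln_dist (u : R * R) :
  measurable_fun [set: R * R] (fun y => ln (enorm (psub u y))).
Proof.
apply: (measurableT_comp (@measurable_ln R)).
apply: (measurableT_comp (continuous_measurable_fun (@sqrt_continuous R))).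
by apply: measurable_funD; apply: measurable_funM; apply: measurable_funB.
Qed.

End EuclideanPlane.

Section Logarithm.
Context {R : realType}.
Implicit Types a b k r : R.

Lemma ln_le_subr1 {b} : 0 < b -> ln b <= b - 1.
Proof. by move=> b_gt0; have := @le_ln1Dx R (b - 1); rewrite subrKC; apply; lra. Qed.

Lemma ln_le_ln a b : 0 <= a -> a <= b -> 1 <= b -> ln a <= ln b.
Proof.
move=> a_ge0 ab b_ge1; have [->|a_neq0] := eqVneq a 0; first by rewrite ln0 // ln_ge0.
by rewrite ler_ln // posrE; [rewrite lt_neqAle eq_sym a_neq0|lra].
Qed.

Lemma ln_le_lnD a b k : 0 < a -> 0 < b -> a <= b + k * b -> ln a <= ln b + k.
Proof.
move=> a_gt0 b_gt0 ab.
have -> : ln a = ln (a / b) + ln b by rewrite ln_div ?posrE // subrK.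
rewrite (addrC (ln (a / b))) lerD2l.
have := ln_le_subr1 (divr_gt0 a_gt0 b_gt0).
suff : a / b - 1 <= k by lra.
by rewrite lerBlDr ler_pdivrMr // mulrDl mul1r addrC.
Qed.

(* Since r^2 <= b (a + b), the bound on a^2 - b^2 gives a - b <= k b. *)
Lemma ln_le_lnD_sqr {a b k r} : 0 < r -> r <= a -> r <= b -> 0 <= k ->
  a ^+ 2 <= b ^+ 2 + k * r ^+ 2 -> ln a <= ln b + k.
Proof.
move=> r_gt0 ra rb k_ge0 ab; apply: ln_le_lnD; [lra|lra|].
have r2_le : k * r ^+ 2 <= k * (b * (a + b)) by rewrite ler_wpM2l // expr2 ler_pM; lra.
have : (a - b) * (a + b) <= (k * b) * (a + b) by rewrite -mulrA; nra.
by rewrite ler_pM2r; lra.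
Qed.

End Logarithm.

Section OpenMeasurable.
Context {R : realType}.

Definition grid_step (n : nat) : R := n.+1%:R^-1.

Definition grid_cell (n : nat) (i j : int) : set (R * R) :=
  [set` `[i%:~R * grid_step n, (i + 1)%:~R * grid_step n[ ] `*`
  [set` `[j%:~R * grid_step n, (j + 1)%:~R * grid_step n[ ].

Lemma grid_step_gt0 n : 0 < grid_step n.
Proof. by rewrite invr_gt0 ltr0n. Qed.

Lemma floor_grid (n : nat) (t : R) (i := Num.floor (t * n.+1%:R)) :
  i%:~R * grid_step n <= t < (i + 1)%:~R * grid_step n.
Proof.
have step_gt0 := grid_step_gt0 n.
have scaleK : n.+1%:R * grid_step n = 1 by rewrite mulfV // pnatr_eq0.
apply/andP; split.
- by have := ler_wpM2r (ltW step_gt0) (floor_le (t * n.+1%:R)); rewrite -mulrA scaleK mulr1.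
- by have := floorD1_gt (t * n.+1%:R); rewrite -(ltr_pM2r step_gt0) -mulrA scaleK mulr1.
Qed.

Lemma dist_grid_lt (n : nat) (i : int) (s t : R) :
  i%:~R * grid_step n <= s < (i + 1)%:~R * grid_step n ->
  i%:~R * grid_step n <= t < (i + 1)%:~R * grid_step n -> `|s - t| < grid_step n.
Proof. by rewrite intrD mulrDl mul1r => /andP[? ?] /andP[? ?]; rewrite ltr_norml; lra. Qed.

(* An open set is the countable union of the grid cells it contains. *)
Lemma open_measurable_plane {D : set (R * R)} : open D -> measurable D.
Proof.
move=> oD.
pose F k := if (unpickle k : option (nat * int * int)) is Some (n, i, j)
  then if `[< grid_cell n i j `<=` D >] then grid_cell n i j else set0 else set0.
suff -> : D = \bigcup_(k in setT) F k.
  apply: bigcup_measurable => k _; rewrite /F; case: unpickle => [[[n i] j]|] //.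
  by case: asboolP => _ //; apply: measurableX; exact: measurable_itv.
apply/seteqP; split => [x Dx|x [k _]]; last first.
  by rewrite /F; case: unpickle => [[[n i] j]|] //; case: asboolP => // sD; exact: sD.
have /nbhs_ballP[e e_gt0 ballD] : nbhs x D by apply: open_nbhs_nbhs.
pose n := Num.truncn e^-1.
have step_lt : grid_step n < e.
  by rewrite -[e]invrK ltf_pV2 ?posrE ?invr_gt0 ?ltr0n // truncnS_gt.
pose i (t : R) := Num.floor (t * n.+1%:R).
exists (pickle (n, i x.1, i x.2)) => //.
have cell_x : grid_cell n (i x.1) (i x.2) x by split => /=; rewrite in_itv floor_grid.
have cellD : grid_cell n (i x.1) (i x.2) `<=` D.
  move=> y [/= y1 y2]; rewrite in_itv /= in y1 y2; apply: ballD; split => /=.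
  - by apply: lt_trans step_lt; exact: dist_grid_lt (floor_grid n x.1) y1.
  - by apply: lt_trans step_lt; exact: dist_grid_lt (floor_grid n x.2) y2.
by rewrite /F pickleK asboolT.
Qed.

End OpenMeasurable.

Definition log_potential {R : realType} (D : set (R * R)) (u : R * R) : \bar R :=
  (\int[@leb2 R]_(y in D) (ln (enorm (psub u y)))%:E)%E.

Lemma phi_lam_eq {R : realType} (D : set (R * R)) (Omega mu lam : R) (x : R * R) :
  phi_lam D Omega mu lam x = 2 * Omega * lam * (x.1 - lam) +
    (2 * pi)^-1 * (fine (log_potential D (reflT lam x)) - fine (log_potential D x)).
Proof.
rewrite /phi_lam /phi /psi -/(log_potential D x) -/(log_potential D (reflT lam x)).
rewrite !enorm_sqr /reflT /=.
have : (pi : R) != 0 by rewrite gt_eqF // pi_gt0.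
by move: (pi : R) => p p_neq0; field.
Qed.

Lemma phi_lam_gt0 {R : realType} (D : set (R * R)) (Omega mu lam e : R) (x : R * R) :
  Omega < 0 ->
  fine (log_potential D x) <= fine (log_potential D (reflT lam x)) + e ->
  e < 4 * pi * (- Omega) * lam * (lam - x.1) -> 0 < phi_lam D Omega mu lam x.
Proof.
move=> Omega_lt0 Px_le e_lt; rewrite phi_lam_eq.
have pi_gt0 : 0 < (pi : R) := pi_gt0 R.
have c_gt0 : 0 < (2 * pi)^-1 :> R by rewrite invr_gt0 mulr_gt0.
have : - ((2 * pi)^-1 * e) <= (2 * pi)^-1 *
    (fine (log_potential D (reflT lam x)) - fine (log_potential D x)).
  by rewrite -mulrN ler_wpM2l ?(ltW c_gt0) //; lra.
have first_term : 2 * (- Omega) * lam * (lam - x.1)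
    = (2 * pi)^-1 * (4 * pi * (- Omega) * lam * (lam - x.1)).
  by move: pi_gt0; move: (pi : R) => p p_gt0; field; rewrite gt_eqF.
have : (2 * pi)^-1 * e < 2 * (- Omega) * lam * (lam - x.1) by rewrite first_term ltr_pM2l.
lra.
Qed.

Section LogPotential.
Context {R : realType}.
Context {D : set (R * R)} {M : R}.
Hypothesis mD : measurable D.
Hypothesis M_gt0 : 0 < M.
Hypothesis D_bounded : forall y, D y -> enorm y <= M.

Let P := log_potential D.
Let vol := fine (@leb2 R D).

Lemma leb2_bounded_fin : @leb2 R D = vol%:E.
Proof.
pose S := [set` `[- M, M]%R] `*` [set` `[- M, M]%R] : set (R * R).
have leb2S : @leb2 R S = ((M + M) * (M + M))%:E.
  rewrite /leb2 product_measure1E; try exact: measurable_itv.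
  have itvM : (@lebesgue_measure R `[- M, M]%classic = (M + M)%:E).
    by rewrite lebesgue_measure_itv /= lte_fin ifT ?opprK -?EFinD // gtrN.
  by rewrite EFinM; congr (_ * _)%E; exact: itvM.
have DS : D `<=` S.
  move=> y Dy; have := D_bounded _ Dy.
  have := normr_fst_le_enorm y; have := normr_snd_le_enorm y.
  by split => /=; rewrite in_itv /= -ler_norml; lra.
have leb2D_le : (@leb2 R D <= ((M + M) * (M + M))%:E)%E.
  by rewrite -leb2S; apply: le_measure => //; rewrite inE //; apply: measurableX;
    exact: measurable_itv.
by rewrite /vol fineK // ge0_fin_numE ?measure_ge0 // (le_lt_trans leb2D_le) ?ltry.
Qed.

Lemma vol_ge0 : 0 <= vol.
Proof. exact/fine_ge0/measure_ge0. Qed.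

Let measurable_ln_dist (v : R * R) :
  measurable_fun D (fun y => (ln (enorm (psub v y)))%:E).
Proof. by apply/measurable_EFinP/measurable_funTS; exact: measurable_fun_ln_dist. Qed.

Let fst_le {y} : D y -> y.1 <= M.
Proof.
by move=> Dy; have := D_bounded _ Dy; have := normr_fst_le_enorm y; have := ler_norm y.1; lra.
Qed.

Section FarPoint.
Variable u : R * R.
Hypothesis u_far : forall y, D y -> 1 <= enorm (psub u y).

Let ln_dist_ge0 y : D y -> (0 <= (ln (enorm (psub u y)))%:E)%E.
Proof. by move=> Dy; rewrite lee_fin ln_ge0 // u_far. Qed.

Lemma log_potential_ge0 : (0 <= P u)%E.
Proof. by apply: integral_ge0; exact: ln_dist_ge0. Qed.

Lemma log_potential_fin_num : P u \is a fin_num.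
Proof.
rewrite ge0_fin_numE ?log_potential_ge0 //.
pose C := 2 * (u.1 ^+ 2 + u.2 ^+ 2) + 2 * M ^+ 2.
apply: (@le_lt_trans _ _ (\int[@leb2 R]_(y in D) (cst C%:E y))%E); last first.
  have : (C%:E * @leb2 R D < +oo)%E by rewrite leb2_bounded_fin -EFinM ltry.
  by rewrite integral_cst.
apply: ge0_le_integral => //; first exact: measurable_ln_dist.
move=> y Dy; rewrite lee_fin.
have b_ge1 := u_far _ Dy.
have ln_le : ln (enorm (psub u y)) <= enorm (psub u y) ^+ 2.
  have := ln_le_subr1 (lt_le_trans ltr01 b_ge1).
  have : enorm (psub u y) <= enorm (psub u y) ^+ 2 by rewrite expr2 ler_peMr //; lra.
  lra.
have y_le : enorm y ^+ 2 <= M ^+ 2.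
  by rewrite ler_pXn2r ?nnegrE ?enorm_ge0 ?(ltW M_gt0) //; exact: D_bounded.
apply: (le_trans ln_le); move: y_le; rewrite /C !enorm_sqr /psub /= => y_le.
have : 0 <= (u.1 + y.1) ^+ 2 + (u.2 + y.2) ^+ 2 by rewrite addr_ge0 ?sqr_ge0.
nra.
Qed.

End FarPoint.

Lemma log_potential_le (u v : R * R) : (forall y, D y -> 1 <= enorm (psub v y)) ->
  (forall y, D y -> enorm (psub u y) <= enorm (psub v y)) -> fine (P u) <= fine (P v).
Proof.
move=> v_far uv.
have Pu_le : (P u <= P v)%E.
  rewrite /P /log_potential integralE.
  apply: (@le_trans _ _ (\int[@leb2 R]_(y in D) ((fun y => (ln (enorm (psub u y)))%:E)^\+ y))%E).
    by apply: geeDl; rewrite oppe_le0; apply: integral_ge0 => y _; exact: funeneg_ge0.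
  apply: ge0_le_integral => //; [|exact: measurable_ln_dist|].
    by apply: measurable_funepos; exact: measurable_ln_dist.
  move=> y Dy; rewrite funeposE ge_max !lee_fin ln_ge0 ?v_far // andbT.
  by apply: ln_le_ln; [exact: enorm_ge0|exact: uv|exact: v_far].
move: Pu_le; rewrite -(fineK (log_potential_fin_num _ v_far)).
have := fine_ge0 (log_potential_ge0 _ v_far).
by case: (P u) => [s||] //=; rewrite lee_fin.
Qed.

Lemma log_potential_le_add (u v : R * R) (k : R) : 0 <= k ->
  (forall y, D y -> 1 <= enorm (psub u y)) -> (forall y, D y -> 1 <= enorm (psub v y)) ->
  (forall y, D y -> ln (enorm (psub u y)) <= ln (enorm (psub v y)) + k) ->
  fine (P u) <= fine (P v) + k * vol.
Proof.
move=> k_ge0 u_far v_far uv.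
rewrite -lee_fin EFinD (fineK (log_potential_fin_num _ u_far)).
rewrite (fineK (log_potential_fin_num _ v_far)).
apply: (@le_trans _ _ (\int[@leb2 R]_(y in D) ((ln (enorm (psub v y)))%:E + (cst k%:E) y))%E).
  apply: ge0_le_integral => //.
  - by move=> y Dy; rewrite lee_fin ln_ge0 ?u_far.
  - exact: measurable_ln_dist.
  - apply/measurable_EFinP; apply: measurable_funD => //.
    by apply: measurable_funTS; exact: measurable_fun_ln_dist.
rewrite ge0_integralD //; last first.
- exact: measurable_ln_dist.
- by move=> y Dy; rewrite lee_fin ln_ge0 ?v_far.
have kvol : (P v + k%:E * @leb2 R D = P v + (k * vol)%:E)%E by rewrite leb2_bounded_fin.
by rewrite integral_cst // -kvol.
Qed.

Lemma log_potential_le_reflT (lam : R) (x : R * R) : M + 1 <= lam -> x.1 < lam ->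
  fine (P x) <= fine (P (reflT lam x)).
Proof.
move=> lam_ge x1_lt; apply: log_potential_le => y Dy.
  have := normr_fst_le_enorm (psub (reflT lam x) y).
  have := ler_norm (psub (reflT lam x) y).1; have := fst_le Dy.
  rewrite /psub /reflT /=; lra.
rewrite -(@ler_pXn2r _ 2) ?nnegrE ?enorm_ge0 // -subr_le0 enorm_psub_reflT.
have := fst_le Dy; nra.
Qed.

Lemma log_potential_le_reflT_far (lam r : R) (x : R * R) :
  0 <= lam -> x.1 <= lam -> 1 <= r -> M + r <= enorm x ->
  fine (P x) <= fine (P (reflT lam x)) + 4 * (lam - x.1) * M / r ^+ 2 * vol.
Proof.
move=> lam_ge0 x1_le r_ge1 x_far.
have r_gt0 : 0 < r by lra.
have x_reflT := enorm_le_reflT lam_ge0 x1_le.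
have dist_ge (z : R * R) y : enorm x <= enorm z -> D y -> r <= enorm (psub z y).
  by move=> xz Dy; have := enorm_lerB z y; have := D_bounded _ Dy; lra.
have k_ge0 : 0 <= 4 * (lam - x.1) * M / r ^+ 2.
  by rewrite divr_ge0 ?sqr_ge0 // !mulr_ge0 ?(ltW M_gt0) //; lra.
apply: log_potential_le_add => // [y Dy|y Dy|y Dy].
- exact: le_trans r_ge1 (dist_ge _ _ (lexx _) Dy).
- exact: le_trans r_ge1 (dist_ge _ _ x_reflT Dy).
apply: (ln_le_lnD_sqr r_gt0 (dist_ge _ _ (lexx _) Dy) (dist_ge _ _ x_reflT Dy) k_ge0).
rewrite divfK ?sqrf_eq0 ?gt_eqF // -lerBlDl enorm_psub_reflT.
have := fst_le Dy; have : 0 <= lam - x.1 by lra.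
nra.
Qed.

Lemma phi_lam_gt0_large_lam (Omega mu lam : R) (x : R * R) :
  Omega < 0 -> M + 1 <= lam -> x.1 < lam -> 0 < phi_lam D Omega mu lam x.
Proof.
move=> Omega_lt0 lam_ge x1_lt; apply: (phi_lam_gt0 _ _ _ _ 0) => //.
  by rewrite addr0 log_potential_le_reflT.
by rewrite !mulr_gt0 ?pi_gt0 //; have := M_gt0; lra.
Qed.

Lemma phi_lam_gt0_far (Omega mu lam0 : R) : Omega < 0 -> 0 < lam0 ->
  exists R0 : R, 0 < R0 /\ forall lam, lam0 <= lam ->
    forall x : R * R, x.1 < lam -> R0 <= enorm x -> 0 < phi_lam D Omega mu lam x.
Proof.
move=> Omega_lt0 lam0_gt0.
have pi_gt0 : 0 < (pi : R) := pi_gt0 R.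
pose c := pi * (- Omega) * lam0.
have c_gt0 : 0 < c by rewrite !mulr_gt0 //; lra.
pose r := 1 + M * vol / c.
have r_ge1 : 1 <= r by rewrite lerDl divr_ge0 ?(ltW c_gt0) // mulr_ge0 ?(ltW M_gt0) ?vol_ge0.
have Mvol_lt lam : lam0 <= lam -> M * vol < pi * (- Omega) * lam * r ^+ 2.
  move=> lam_ge; have cr : c * r = c + M * vol by rewrite /r; field; rewrite gt_eqF.
  have : c <= pi * (- Omega) * lam by rewrite ler_wpM2l // mulr_ge0; lra.
  have : c * r <= c * r ^+ 2 by rewrite expr2 mulrA ler_peMr // mulr_ge0 ?(ltW c_gt0); lra.
  nra.
exists (M + r); split=> [|lam lam_ge x x1_lt x_far]; first by have := M_gt0; lra.
have t_gt0 : 0 < lam - x.1 by lra.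
apply: (phi_lam_gt0 _ _ _ _ _ _ Omega_lt0 (log_potential_le_reflT_far lam r x _ _ r_ge1 x_far));
  [lra|lra|].
have r2_gt0 : 0 < r ^+ 2 by rewrite exprn_gt0 //; lra.
rewrite mulrAC ltr_pdivrMr //.
have -> : 4 * (lam - x.1) * M * vol = 4 * (lam - x.1) * (M * vol) by ring.
have -> : 4 * pi * (- Omega) * lam * (lam - x.1) * r ^+ 2
  = 4 * (lam - x.1) * (pi * (- Omega) * lam * r ^+ 2) by ring.
by rewrite ltr_pM2l ?Mvol_lt // mulr_gt0 // ltr0n.
Qed.

End LogPotential.

Theorem proposition3 (R : realType) (D : set (R * R)) (Omega mu : R) :
  C1_domain D -> barycenter_origin D -> in_Sigma D ->
  Omega < 0 -> Vstate D Omega mu ->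
  (forall x, phi D Omega mu x =
     mu + 2^-1 * Omega * enorm x ^+ 2
     - (2 * pi)^-1 * fine (\int[@leb2 R]_(y in [set: R * R])
                             (ln (enorm (psub x y)) * heav (phi D Omega mu y))%:E)%E) ->
  (exists lamstar : R, 0 < lamstar /\
     forall lam, lamstar <= lam ->
       forall x : R * R, x.1 < lam -> 0 < phi_lam D Omega mu lam x) /\
  (forall lam0 : R, 0 < lam0 ->
     exists R0 : R, 0 < R0 /\
       forall lam, lam0 <= lam ->
         forall x : R * R, x.1 < lam -> R0 <= enorm x -> 0 < phi_lam D Omega mu lam x).
Proof.
move=> [oD [_ [_ [[M0 D_bounded0] _]]]] _ _ Omega_lt0 _ _.
have M_gt0 : 0 < `|M0| + 1 by rewrite ltr_pwDr.
have D_bounded y : D y -> enorm y <= `|M0| + 1.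
  by move=> Dy; have := D_bounded0 _ Dy; have := ler_norm M0; lra.
have mD := open_measurable_plane oD.
split; last by move=> lam0; exact: phi_lam_gt0_far mD M_gt0 D_bounded _ _ _ Omega_lt0.
exists (`|M0| + 2); split=> [|lam lam_ge x]; first by rewrite ltr_pwDr.
by apply: phi_lam_gt0_large_lam mD M_gt0 D_bounded _ _ _ _ Omega_lt0 _; lra.
Qed.
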